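(* Let $T$ be a labeled tree with an even number of vertices whose bipartition $V(T)=A\sqcup B$ into two independent sets satisfies $|A|\ne|B|$. Then $X(T;\mathbf{x},q)$ is not palindromic; in particular it is not symmetric.
   Context: A labeled graph is a finite simple graph with vertex set $[n]$. A proper coloring is $c\colon[n]\to\{1,2,\dots\}$ with adjacent vertices colored differently; $\operatorname{asc}(c)=\#\{ij\in E: i<j,\ c(i)<c(j)\}$. The CQF is $X(G;\mathbf{x},q)=\sum_{c \text{ proper}} x_{c(1)}\cdots x_{c(n)}q^{\operatorname{asc}(c)}$. It is symmetric if each coefficient of $q^k$ is a symmetric function, and palindromic if, with $m=|E|$, the coefficient of $q^k$ equals that of $q^{m-k}$ for all $k$. *)

From mathcomp Require Import all_boot.
Set Implicit Arguments. Unset Strict Implicit. Unset Printing Implicit Defensive.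

(* A labeled graph on vertex set [n] = 'I_n (vertex i <-> label i+1),
   given by a symmetric irreflexive relation e. *)

Definition connected_graph n (e : rel 'I_n) : Prop := forall x y, connect e x y.

Definition acyclic_graph n (e : rel 'I_n) : Prop :=
  forall s : seq 'I_n, 3 <= size s -> ~ ucycle e s.

Definition is_tree n (e : rel 'I_n) : Prop := connected_graph e /\ acyclic_graph e.

Definition independent n (e : rel 'I_n) (A : {set 'I_n}) : bool :=
  [forall i in A, forall j in A, ~~ e i j].

(* Colorings with colors in {1,..,k}, color j : 'I_k standing for j+1. *)
Definition proper_col n k (e : rel 'I_n) (c : {ffun 'I_n -> 'I_k}) : bool :=
  [forall i, forall j, e i j ==> (c i != c j)].

Definition asc n k (e : rel 'I_n) (c : {ffun 'I_n -> 'I_k}) : nat :=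
  #|[set p : 'I_n * 'I_n | [&& p.1 < p.2, e p.1 p.2 & c p.1 < c p.2]]|.

Definition nedges n (e : rel 'I_n) : nat :=
  #|[set p : 'I_n * 'I_n | (p.1 < p.2) && e p.1 p.2]|.

(* Coefficient of q^k x_1^(alpha_0) x_2^(alpha_1) ... x_r^(alpha_(r-1)) in
   X(G; x, q), where alpha = [:: alpha_0; ...; alpha_(r-1)]: the number of
   proper colorings with exactly alpha_j vertices of color j+1 (hence no
   color > r) and with k ascents. *)
Definition cqf_coef n (e : rel 'I_n) (k : nat) (alpha : seq nat) : nat :=
  #|[set c : {ffun 'I_n -> 'I_(size alpha)} |
      [&& proper_col e c,
          [forall j : 'I_(size alpha), #|[set i | c i == j]| == nth 0 alpha j]
        & asc e c == k]]|.

Definition cqf_symmetric n (e : rel 'I_n) : Prop :=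
  forall (k : nat) (alpha beta : seq nat),
    perm_eq alpha beta -> cqf_coef e k alpha = cqf_coef e k beta.

Definition cqf_palindromic n (e : rel 'I_n) : Prop :=
  forall (k : nat) (alpha : seq nat), k <= nedges e ->
    cqf_coef e k alpha = cqf_coef e (nedges e - k) alpha.

(* Colouring A with 1 and its complement B with 2 is, as the tree is connected
   and |A| <> |B|, the only proper colouring with colour multiplicities
   (|A|, |B|); likewise with the colours swapped.  So the coefficients of
   x_1^|A| x_2^|B| and x_1^|B| x_2^|A| are single powers q^k and q^k'.  Each
   edge ascends in exactly one of the two colourings, hence k + k' = |E| = n - 1,
   which is odd.  Thus k <> k' = |E| - k, contradicting palindromicity and
   symmetry.  That a tree has n - 1 edges follows by removing a leaf, found at
   the end of a maximal path. *)

From mathcomp Require Import all_boot zify.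
Set Implicit Arguments. Unset Strict Implicit. Unset Printing Implicit Defensive.

Section TreeArcs.

Variables (T : finType) (e : rel T).
Hypotheses (e_sym : symmetric e) (e_irr : irreflexive e)
  (e_acyclic : forall s : seq T, 3 <= size s -> ~ ucycle e s).

Definition induced (S : {set T}) : rel T :=
  fun x y => [&& x \in S, y \in S & e x y].

Definition arcs (S : {set T}) : {set T * T} := [set p | induced S p.1 p.2].

Definition connected_in (S : {set T}) : Prop :=
  {in S &, forall x y, connect (induced S) x y}.

Definition leaf_in (S : {set T}) (v u : T) : Prop :=
  induced S v u /\ forall w, induced S v w -> w = u.

Lemma induced_sym S : symmetric (induced S).
Proof. by move=> x y; rewrite /induced e_sym andbCA. Qed.

Lemma induced_subrel S x y : induced S x y -> e x y.
Proof. by case/and3P. Qed.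

Lemma induced_neq S x y : induced S x y -> x != y.
Proof. by move/induced_subrel; apply: contraTneq => ->; rewrite e_irr. Qed.

Lemma path_chord_free (v u w : T) (p : seq T) :
  uniq (v :: u :: p) -> path e v (u :: p) -> e v w -> w \notin p.
Proof.
move=> vp_uniq vp_path e_vw; apply/negP => w_p.
case/splitPr: w_p vp_uniq vp_path => p1 p2 vp_uniq vp_path.
apply: (e_acyclic (s := v :: u :: rcons p1 w)).
  by rewrite /= size_rcons.
apply/andP; split.
  rewrite /cycle rcons_cons /= rcons_path last_rcons.
  move: vp_path => /= /andP[-> ]; rewrite cat_path /= => /and3P[p1_path e_w _].
  by rewrite rcons_path p1_path e_w e_sym e_vw.
apply: subseq_uniq vp_uniq; rewrite -cats1 -!cat_cons -(cat1s w p2) catA.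
exact: prefix_subseq.
Qed.

Lemma connected_in_neighbour (S : {set T}) (v : T) :
  connected_in S -> 1 < #|S| -> v \in S -> exists w, induced S v w.
Proof.
move=> S_conn S_gt1 Sv.
have [y Sy y_neq_v] : exists2 y, y \in S & y != v.
  have : 0 < #|S :\ v| by move: S_gt1; rewrite (cardsD1 v) Sv; lia.
  by rewrite card_gt0 => /set0Pn[y]; rewrite in_setD1 => /andP[]; exists y.
case/connectP: (S_conn v y Sv Sy) => [[|w p] /= vp_path y_last].
  by rewrite y_last eqxx in y_neq_v.
by exists w; case/andP: vp_path.
Qed.

(* Prepend unvisited neighbours of the head as long as there are any. *)
Lemma maximal_path (S : {set T}) (v : T) (p : seq T) :
  v \in S -> uniq (v :: p) -> path (induced S) v p ->
  exists v' p', [/\ v' \in S, uniq (v' :: p'), path (induced S) v' p'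
                  & forall w, induced S v' w -> w \in v' :: p'].
Proof.
have [m size_p] : exists m, #|T| - size p <= m by exists (#|T| - size p).
elim: m v p size_p => [|m IH] v p size_p Sv vp_uniq vp_path;
  have [w /andP[vw w_new] | no_new] :=
    pickP [pred w | induced S v w && (w \notin v :: p)];
  try by exists v, p; split=> // w vw; move: (no_new w); rewrite /= vw => /negbFE.
all: have wvp_uniq : uniq (w :: v :: p) by rewrite cons_uniq w_new vp_uniq.
all: have wvp_card : size (w :: v :: p) <= #|T|
       by rewrite -(card_uniqP wvp_uniq) max_card.
  by move: size_p; rewrite leqn0 subn_eq0 => /(leq_trans wvp_card)/ltnW; rewrite ltnn.
apply: (IH w (v :: p)) => //=; first by rewrite subnS -subn1 leq_subLR add1n.
- by case/and3P: vw.
- by rewrite induced_sym vw.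
Qed.

Lemma leaf_exists S :
  connected_in S -> 1 < #|S| -> exists v u, v \in S /\ leaf_in S v u.
Proof.
move=> S_conn S_gt1.
have [v0 Sv0] : exists v, v \in S by apply/set0Pn; rewrite -card_gt0; lia.
have [v [[|u p] [Sv vp_uniq vp_path v_max]]] := @maximal_path S v0 [::] Sv0 isT isT.
  have [w vw] := connected_in_neighbour S_conn S_gt1 Sv.
  by move: (v_max w vw) (induced_neq vw); rewrite inE => /eqP->; rewrite eqxx.
exists v, u; split=> //; split=> [|w vw]; first by case/andP: vp_path.
move: (v_max w vw); rewrite !inE eq_sym (negbTE (induced_neq vw)) /=.
case/orP=> [/eqP //|]; apply: contraTeq => _.
apply: path_chord_free vp_uniq _ (induced_subrel vw).
by apply: sub_path vp_path => ? ?; apply: induced_subrel.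
Qed.

Lemma path_induced_setD1 (S : {set T}) (v x : T) (p : seq T) :
  path (induced S) x p -> v \notin x :: p -> path (induced (S :\ v)) x p.
Proof.
elim: p x => [|y p IH] x //= /andP[xy yp_path].
rewrite in_cons negb_or => /andP[x_neq_v yp_v].
rewrite IH // andbT; move: xy yp_v; rewrite /induced !in_setD1 in_cons negb_or.
by rewrite ![_ == v]eq_sym x_neq_v => /and3P[-> -> ->] /andP[-> _].
Qed.

(* A shortest path between two other vertices cannot pass through a leaf:
   it would have to enter and leave it through the same neighbour. *)
Lemma connected_in_setD1_leaf (S : {set T}) (v u : T) :
  connected_in S -> leaf_in S v u -> connected_in (S :\ v).
Proof.
move=> S_conn [_ v_leaf] x y.
rewrite !in_setD1 => /andP[x_neq_v Sx] /andP[y_neq_v Sy].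
case/connectP: (S_conn x y Sx Sy) => p xp_path y_last.
move: y_neq_v; rewrite y_last; case/shortenP: xp_path => p' xp'_path xp'_uniq _ y_neq_v.
apply/connectP; exists p' => //; apply: (path_induced_setD1 xp'_path).
rewrite inE eq_sym (negbTE x_neq_v) /=; apply/negP => v_p'.
case/splitPr: v_p' xp'_path xp'_uniq y_neq_v => p1 [|b p2] xp'_path xp'_uniq y_neq_v.
  by rewrite last_cat eqxx in y_neq_v.
move: xp'_path; rewrite cat_path /= => /and3P[_ av /andP[vb _]].
have a_eq_u := v_leaf _ (etrans (induced_sym _ _ _) av).
move: xp'_uniq; rewrite -cat_cons cat_uniq => /and3P[_ /hasP[]]; exists b.
  by rewrite !inE eqxx orbT.
by rewrite (v_leaf _ vb) -a_eq_u mem_last.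
Qed.

Lemma card_arcs_setD1_leaf (S : {set T}) (v u : T) :
  v \in S -> leaf_in S v u -> #|arcs S| = #|arcs (S :\ v)| + 2.
Proof.
move=> Sv [vu v_leaf]; have Su : u \in S by case/and3P: vu.
have u_neq_v : u != v by rewrite eq_sym (induced_neq vu).
rewrite -(cardsID (arcs (S :\ v)) (arcs S)).
have -> : arcs S :&: arcs (S :\ v) = arcs (S :\ v).
  apply/setIidPr/subsetP => -[a b]; rewrite !inE /induced !in_setD1 /=.
  by case/and3P=> /andP[_ ->] /andP[_ ->] ->.
have -> : arcs S :\: arcs (S :\ v) = [set (v, u); (u, v)].
  apply/setP => -[a b]; rewrite !inE /induced !in_setD1 /= !xpair_eqE.
  apply/idP/idP => [/and4P[ab_new Sa Sb ab]|].
    case: (a =P v) => [a_eq_v|/eqP a_neq_v].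
      by rewrite (v_leaf b) ?eqxx //= /induced -a_eq_v Sa Sb ab.
    move: ab_new; rewrite Sa Sb ab a_neq_v /= !andbT negbK => /eqP b_eq_v.
    by rewrite b_eq_v eqxx (v_leaf a) ?eqxx ?orbT // /induced Sv Sa -b_eq_v e_sym.
  have e_vu := induced_subrel vu.
  by case/orP=> /andP[/eqP-> /eqP->]; rewrite eqxx /= ?andbF Sv Su // e_sym.
by rewrite cards2 xpair_eqE eq_sym (negbTE u_neq_v) addnC.
Qed.

Lemma card_arcs_tree S :
  connected_in S -> 0 < #|S| -> #|arcs S| = (#|S|).-1.*2.
Proof.
move: {2}#|S| (leqnn #|S|) => N; elim: N S => [|N IH] S S_le S_conn S_gt0.
  by move: S_le S_gt0; lia.
case: (ltngtP #|S| 1) => [|S_gt1|S_eq1]; first lia.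
  have [v [u [Sv v_leaf]]] := leaf_exists S_conn S_gt1.
  have [vu _] := v_leaf; have Su : u \in S by case/and3P: vu.
  have S_card : #|S| = (#|S :\ v|).+1 by rewrite (cardsD1 v) Sv.
  have S'_gt0 : 0 < #|S :\ v|.
    by apply/card_gt0P; exists u; rewrite in_setD1 eq_sym (induced_neq vu).
  rewrite (card_arcs_setD1_leaf Sv v_leaf) IH //.
  - by rewrite S_card -(prednK S'_gt0) /= doubleS addn2.
  - by move: S_le; rewrite S_card.
  - exact: connected_in_setD1_leaf S_conn v_leaf.
have [x ->] : exists x, S = [set x] by apply/cards1P/eqP.
rewrite cards1 /=; apply/eqP; rewrite cards_eq0; apply/eqP/setP => -[a b].
by rewrite !inE /induced !inE /=; case: eqP => // ->; case: eqP => // ->; rewrite e_irr.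
Qed.

End TreeArcs.

Lemma card_arcs_setT n (e : rel 'I_n) :
  symmetric e -> irreflexive e -> #|arcs e [set: 'I_n]| = (nedges e).*2.
Proof.
move=> e_sym e_irr; rewrite /nedges.
set E := [set p : 'I_n * 'I_n | (p.1 < p.2) && e p.1 p.2].
rewrite -(cardsID E (arcs e setT)).
have -> : arcs e setT :&: E = E.
  by apply/setIidPr/subsetP => -[a b]; rewrite !inE /induced !inE => /andP[].
have -> : arcs e setT :\: E = (fun p : 'I_n * 'I_n => (p.2, p.1)) @^-1: E.
  apply/setP => -[a b]; rewrite !inE /induced !inE /= (e_sym b a).
  case ab: (e a b); rewrite ?andbF ?andbT //=.
  have : a != b by apply: contraTneq ab => ->; rewrite e_irr.
  by rewrite -val_eqE /=; case: ltngtP.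
by rewrite card_preimset ?addnn // => -[a b] [c d] [-> ->].
Qed.

Lemma tree_nedges n (e : rel 'I_n) :
  symmetric e -> irreflexive e -> is_tree e -> 0 < n -> nedges e = n.-1.
Proof.
move=> e_sym e_irr [e_conn e_acyclic] n_gt0.
have setT_conn : connected_in e [set: 'I_n].
  by move=> x y _ _; rewrite (@eq_connect _ _ e) // => a b; rewrite /induced !inE.
have := card_arcs_tree e_sym e_irr e_acyclic setT_conn.
by rewrite card_arcs_setT // cardsT card_ord => /(_ n_gt0)/double_inj.
Qed.

Lemma independent_edgeF n (e : rel 'I_n) (A : {set 'I_n}) x y :
  independent e A -> x \in A -> y \in A -> e x y = false.
Proof. by move=> /forall_inP A_indep Ax Ay; apply/negbTE/(forall_inP (A_indep x Ax)). Qed.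

Lemma ord2_neq_eq (a b c d : 'I_2) : a != b -> c != d -> (a == c) = (b == d).
Proof. by case: a b c d => [[|[|?]] ?] [[|[|?]] ?] [[|[|?]] ?] [[|[|?]] ?]. Qed.

Lemma proper_col2_eq_or_swap n (e : rel 'I_n) (c c' : {ffun 'I_n -> 'I_2}) :
  connected_graph e -> proper_col e c -> proper_col e c' ->
  c = c' \/ forall i, c i != c' i.
Proof.
move=> e_conn c_prop c'_prop.
have agree_edge x y : e x y -> (c x == c' x) = (c y == c' y).
  move=> xy; apply: ord2_neq_eq.
  - by move/forallP/(_ x)/forallP/(_ y)/implyP: c_prop; apply.
  - by move/forallP/(_ x)/forallP/(_ y)/implyP: c'_prop; apply.
have agree_connect x y : connect e x y -> (c x == c' x) = (c y == c' y).
  case/connectP=> p xp_path ->; elim: p x xp_path => //= z p IH x.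
  by case/andP=> /agree_edge-> /IH.
have [x0 agree_x0 | disagree] := pickP (fun x => c x == c' x).
  by left; apply/ffunP => y; apply/eqP; rewrite -(agree_connect x0 y (e_conn x0 y)).
by right=> i; rewrite disagree.
Qed.

Definition bicolouring n (A : {set 'I_n}) : {ffun 'I_n -> 'I_2} :=
  [ffun i => if i \in A then ord0 else ord_max].

Section Bipartition.

Variables (n : nat) (e : rel 'I_n) (A : {set 'I_n}).
Hypotheses (A_indep : independent e A) (AC_indep : independent e (~: A)).

Lemma bicolouring_edge x y : e x y -> bicolouring A x != bicolouring A y.
Proof.
move=> xy; rewrite !ffunE; case Ax: (x \in A); case Ay: (y \in A) => //.
  by rewrite (independent_edgeF A_indep Ax Ay) in xy.
by rewrite (independent_edgeF AC_indep (x := x) (y := y)) ?inE ?Ax ?Ay in xy.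
Qed.

Lemma proper_bicolouring : proper_col e (bicolouring A).
Proof. by apply/forallP => x; apply/forallP => y; apply/implyP/bicolouring_edge. Qed.

Lemma asc_bicolouring_setC :
  asc e (bicolouring A) + asc e (bicolouring (~: A)) = nedges e.
Proof.
rewrite /asc /nedges.
rewrite -(cardsID [set p : 'I_n * 'I_n | bicolouring A p.1 < bicolouring A p.2]
                  [set p : 'I_n * 'I_n | (p.1 < p.2) && e p.1 p.2]).
congr (_ + _); apply: eq_card => -[a b]; rewrite !inE /= !ffunE ?inE.
  by case: (a < b); case: (e a b); rewrite ?andbF.
case: (a < b) => //=; case ab: (e a b); rewrite ?andbF //=.
by move: (bicolouring_edge ab); rewrite !ffunE; case: (a \in A); case: (b \in A).
Qed.

Hypotheses (e_conn : connected_graph e) (A_card : #|A| != #|~: A|).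

Lemma cqf_coef_bicolouring k :
  cqf_coef e k [:: #|A|; #|~: A|] = (asc e (bicolouring A) == k).
Proof.
pose counts (c : {ffun 'I_n -> 'I_2}) :=
  [forall j : 'I_2, #|[set i | c i == j]| == nth 0 [:: #|A|; #|~: A|] j].
have bicolouring_counts : counts (bicolouring A).
  apply/forallP => -[[|[|j]] j_lt] //=; apply/eqP/eq_card => i;
  by rewrite !inE ffunE -val_eqE /=; case: (i \in A).
have counts_bicolouring c : proper_col e c -> counts c -> c = bicolouring A.
  move=> c_prop c_counts.
  case: (proper_col2_eq_or_swap e_conn c_prop proper_bicolouring) => // swap.
  move/forallP/(_ ord0)/eqP: c_counts => /=.
  have -> : #|[set i | c i == ord0]| = #|~: A|.
    have ord0_neq_max : ord0 != ord_max :> 'I_2 by [].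
    apply: eq_card => i; rewrite !inE (ord2_neq_eq (swap i) ord0_neq_max).
    by rewrite ffunE; case: (i \in A).
  by move/eqP; rewrite eq_sym (negbTE A_card).
rewrite /cqf_coef; have [asc_k|asc_neq_k] := eqVneq.
  apply/eqP/cards1P; exists (bicolouring A); apply/setP => c; rewrite !inE.
  apply/idP/eqP => [/and3P[c_prop c_counts _]| ->]; first exact: counts_bicolouring.
  by rewrite proper_bicolouring asc_k eqxx andbT; apply: bicolouring_counts.
apply/eqP; rewrite cards_eq0; apply/eqP/setP => c; rewrite !inE.
apply/negbTE/and3P => -[c_prop c_counts /eqP asc_c]; move: asc_neq_k.
by rewrite -asc_c (counts_bicolouring c c_prop c_counts) eqxx.
Qed.

End Bipartition.

Theorem corollary5p4 (n : nat) (e : rel 'I_n) :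
  symmetric e -> irreflexive e -> is_tree e -> ~~ odd n ->
  (exists A : {set 'I_n},
      [/\ independent e A, independent e (~: A) & #|A| != #|~: A|]) ->
  ~ cqf_palindromic e /\ ~ cqf_symmetric e.
Proof.
move=> e_sym e_irr e_tree n_even [A [A_indep AC_indep A_card]].
have [e_conn _] := e_tree.
have n_gt0 : 0 < n by have := cardsC A; rewrite card_ord; move/eqP: A_card; lia.
have m_odd : odd (nedges e).
  rewrite (tree_nedges e_sym e_irr e_tree n_gt0).
  by rewrite -(prednK n_gt0) /= in n_even; apply: negbNE.
have asc_sum := asc_bicolouring_setC A_indep AC_indep.
set k := asc e (bicolouring A) in asc_sum.
set k' := asc e (bicolouring (~: A)) in asc_sum.
have k_neq : k != k'.
  by apply: contraTneq m_odd => k_eq; rewrite -asc_sum k_eq addnn odd_double.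
have coefA j := cqf_coef_bicolouring A_indep AC_indep e_conn A_card j.
have coefAC j : cqf_coef e j [:: #|~: A|; #|A|] = (k' == j).
  have AC_card : #|~: A| != #|~: ~: A| by rewrite setCK eq_sym.
  have := cqf_coef_bicolouring AC_indep _ e_conn AC_card j.
  by rewrite setCK; apply.
split=> [palin | sym].
- have := palin k [:: #|A|; #|~: A|]; rewrite -asc_sum leq_addr addKn.
  by rewrite !coefA eqxx (negbTE k_neq) => /(_ isT).
- have := sym k [:: #|A|; #|~: A|] [:: #|~: A|; #|A|].
  rewrite coefA coefAC eqxx eq_sym (negbTE k_neq).
  by move=> /(_ (permEl (perm_catC [:: #|A|] [:: #|~: A|]))).
Qed.
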